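(* Let $G$ be an internally vertex-color-avoiding connected graph on $n$ vertices whose vertices are colored with exactly $k$ colors. Then $|E(G)|\ge \binom{n}{2}$ if $k=1$, and $|E(G)|\ge \left\lceil \frac{2k-1}{2k-2}n-\frac{k}{k-1}\right\rceil$ if $k\ge 2$. Moreover, these lower bounds are sharp (for each $k$, attained by suitable such graphs for all sufficiently large $n$).
   Context: Vertex-colorings are arbitrary (not necessarily proper). Two vertices $u,v$ are internally vertex-$c$-avoiding connected (for a color $c$) if some $u$-$v$ path contains no internal vertex of color $c$. A graph is internally vertex-color-avoiding connected if any two vertices are internally vertex-$c$-avoiding connected for every color $c$. *)

From HB Require Import structures.
From mathcomp Require Import all_boot all_order all_algebra.
Set Implicit Arguments. Unset Strict Implicit. Unset Printing Implicit Defensive.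
From mathcomp Require Import ssrint rat archimedean.
Import Order.TTheory GRing.Theory Num.Theory.

Definition simple_graph n (e : rel 'I_n) : Prop := symmetric e /\ irreflexive e.

(* Edge set: unordered pairs {u,v} counted once, as pairs with u < v. *)
Definition num_edges n (e : rel 'I_n) : nat :=
  #|[set p : 'I_n * 'I_n | e p.1 p.2 && (p.1 < p.2)%N]|.

(* The (not necessarily proper) vertex colouring c uses exactly k colours. *)
Definition uses_exactly_k_colors n k (c : 'I_n -> 'I_k) : Prop :=
  forall j : 'I_k, exists v, c v = j.

(* u-v path: u :: p is an e-path with no repeated vertex ending at v;
   its internal vertices are those of u :: p other than the first and last,
   i.e. behead (belast u p). *)
Definition int_avoiding_connected n k (e : rel 'I_n) (c : 'I_n -> 'I_k)
    (col : 'I_k) (u v : 'I_n) : Prop :=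
  exists p : seq 'I_n,
    [/\ path e u p, last u p = v, uniq (u :: p) &
        all (fun w => c w != col) (behead (belast u p))].

Definition int_vertex_color_avoiding_connected n k (e : rel 'I_n)
    (c : 'I_n -> 'I_k) : Prop :=
  forall (col : 'I_k) (u v : 'I_n), int_avoiding_connected e c col u v.

Definition icac_bound (n k : nat) : int :=
  if k == 1%N then Posz (binomial n 2)
  else Num.ceil (((2 * k - 1)%N%:R / (2 * k - 2)%N%:R) * n%:R - k%:R / (k - 1)%N%:R
                  : rat)%R.

From HB Require Import structures.
From mathcomp Require Import all_boot all_order all_algebra.
From mathcomp Require Import ssrint rat archimedean.
From mathcomp Require Import zify ring lra.
Import Order.TTheory GRing.Theory Num.Theory.
Set Implicit Arguments. Unset Strict Implicit. Unset Printing Implicit Defensive.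

(* For a colour col, any two vertices not coloured col are joined by a path
   avoiding col, so these vertices span a connected subgraph with at least (their number - 1)
   edges.  Summing over the k colours counts every vertex k - 1 times, every monochromatic edge
   k - 1 times and every bichromatic edge k - 2 times:  (k - 1) n - k <= (k - 1) |E| - B, with B
   the number of bichromatic edges.  A path from v to a vertex of another colour avoiding the
   colour of v starts at a neighbour of another colour, so every vertex lies on a bichromatic edge
   and 2 B >= n; hence (2k - 1) n <= (2k - 2) |E| + 2k.  For k = 1 every path with an internal
   vertex is forbidden, so the graph is complete.

   Join two hubs coloured 0 and 1 by an edge and attach ears: paths of s <= 2k - 2 new
   vertices from hub 0 to hub 1, coloured 0, 2, 2, 3, 3, ..., 1 along the path.  An ear adds s
   vertices and s + 1 edges, and each colour occupies a segment of it, so after deleting a colour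
   every remaining ear vertex still reaches a hub.  One ear of length 2k - 2 shows all k colours;
   covering the other vertices by ears of length 2k - 2 and one remainder ear attains the bound. *)

Definition walk_within (T : Type) (e : rel T) (A : pred T) (x y : T) : Prop :=
  exists p, [/\ path e x p, last x p = y & all A p].

Section Walks.
Variables (T : Type) (e : rel T) (A : pred T).

Lemma walk_within_refl x : walk_within e A x x.
Proof. by exists [::]. Qed.

Lemma walk_within1 x y : e x y -> A y -> walk_within e A x y.
Proof. by move=> exy Ay; exists [:: y]; rewrite /= exy Ay. Qed.

Lemma walk_within_trans y x z :
  walk_within e A x y -> walk_within e A y z -> walk_within e A x z.
Proof.
move=> [p [pp <- ap]] [q [qp <- aq]].
by exists (p ++ q); rewrite cat_path last_cat all_cat pp qp ap aq.
Qed.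

Lemma walk_within_sym x y :
  symmetric e -> A x -> walk_within e A x y -> walk_within e A y x.
Proof.
move=> esym Ax [p [pp <- ap]]; elim: p x pp ap Ax => [|z p IH] x /=.
  by move=> *; apply: walk_within_refl.
case/andP=> exz pz /andP[Az ap] Ax.
apply: walk_within_trans (IH z pz ap Az) (walk_within1 _ Ax).
by rewrite esym.
Qed.

Lemma walk_within_exit (B : {pred T}) x y :
  walk_within e A x y -> x \in B -> y \notin B ->
  exists u v, [/\ u \in B, v \notin B, A v & e u v].
Proof.
move=> [p [pp <- ap]]; elim: p x pp ap => [|z p IH] x /=.
  by move=> _ _ ->.
case/andP=> exz pz /andP[Az ap] Bx; case: (boolP (z \in B)) => [Bz|nBz].
  exact: IH.
by move=> _; exists x, z.
Qed.

End Walks.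

Lemma walk_within_sub (T : Type) (e e' : rel T) (A A' : pred T) x y :
  (forall u v, e u v -> e' u v) -> (forall u v, e u v -> A v -> A' v) ->
  walk_within e A x y -> walk_within e' A' x y.
Proof.
move=> ee' AA' [p [pp <- ap]].
suff /andP[pp' ap'] : path e' x p && all A' p by exists p.
elim: p x pp ap => [|z p IH] x //= /andP[exz pz] /andP[Az ap].
by rewrite ee' // (AA' x) //=; apply: IH.
Qed.

Lemma walk_within_up (e : rel nat) (A : pred nat) x y : x <= y ->
  (forall z, x <= z < y -> e z z.+1) -> (forall z, x < z <= y -> A z) ->
  walk_within e A x y.
Proof.
elim: y => [|y IH] le_xy he hA.
  by move: le_xy; rewrite leqn0 => /eqP ->; apply: walk_within_refl.
case: (eqVneq x y.+1) => [->|ne]; first exact: walk_within_refl.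
apply: (@walk_within_trans _ _ _ y); [apply: IH | apply: walk_within1]; try lia.
- by move=> z hz; apply: he; lia.
- by move=> z hz; apply: hA; lia.
- by apply: he; lia.
- by apply: hA; lia.
Qed.

Lemma walk_within_down (e : rel nat) (A : pred nat) x y : y <= x ->
  (forall z, y <= z < x -> e z.+1 z) -> (forall z, y <= z < x -> A z) ->
  walk_within e A x y.
Proof.
elim: x => [|x IH] le_yx he hA.
  by move: le_yx; rewrite leqn0 => /eqP ->; apply: walk_within_refl.
case: (eqVneq y x.+1) => [->|ne]; first exact: walk_within_refl.
apply: (@walk_within_trans _ _ _ x); [apply: walk_within1 | apply: IH]; try lia.
- by apply: he; lia.
- by apply: hA; lia.
- by move=> z hz; apply: he; lia.
- by move=> z hz; apply: hA; lia.
Qed.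

Definition edges_within (T : finType) (e : rel T) (A : {set T}) : {set {set T}} :=
  [set [set x; y] | x in A, y in A & e x y].

Lemma edges_withinS (T : finType) (e : rel T) (A B : {set T}) :
  A \subset B -> edges_within e A \subset edges_within e B.
Proof.
move=> /subsetP sAB; apply/subsetP=> E /imset2P[x y Ax]; rewrite inE => /andP[Ay exy] ->.
by apply: imset2_f; rewrite ?inE ?sAB.
Qed.

Lemma card_le_edges_within (T : finType) (e : rel T) (A : {set T}) :
  {in A &, forall x y, walk_within e [in A] x y} -> #|A| <= #|edges_within e A| + 1.
Proof.
move=> connA; case: (set_0Vmem A) => [->|[r rA]]; first by rewrite cards0.
(* Grow B from [set r] inside A: an edge leaving B adds one vertex and one new edge. *)
suff grow (B : {set T}) : r \in B -> B \subset A -> #|B| <= #|edges_within e B| + 1 ->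
    #|A| <= #|edges_within e A| + 1.
  by apply: (grow [set r]); rewrite ?set11 ?sub1set ?cards1 ?addn1.
move Hm : #|A :\: B| => m; elim: m B Hm => [|m IH] B Hm rB sBA leB.
  suff -> : A = B by [].
  by apply/eqP; rewrite eqEsubset sBA andbT -setD_eq0 -cards_eq0 Hm.
have [v vAB] : exists v, v \in A :\: B by apply/set0Pn; rewrite -cards_eq0 Hm.
have [vB vA] : v \notin B /\ v \in A by move: vAB; rewrite inE => /andP[].
have [u [w [uB wB /= wA euw]]] := walk_within_exit (connA r v rA vA) rB vB.
have wAB : w \in A :\: B by rewrite inE wB wA.
apply: (IH (w |: B)).
- by move: Hm; rewrite setUC -setDDl (cardsD1 w (A :\: B)) wAB add1n => -[].
- exact: setU1r.
- by rewrite subUset sub1set wA sBA.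
have new : [set u; w] \notin edges_within e B.
  apply: contraNN wB => /imset2P[x y xB]; rewrite inE => /andP[yB _] uwxy.
  by have := set22 u w; rewrite uwxy => /set2P[] ->.
have sub : [set u; w] |: edges_within e B \subset edges_within e (w |: B).
  rewrite subUset sub1set edges_withinS ?subsetUr // andbT.
  by apply: imset2_f; rewrite !inE ?eqxx ?uB ?orbT.
rewrite cardsU1 (negPf wB).
have := subset_leq_card sub; rewrite cardsU1 (negPf new) /= !add1n addn1 ltnS.
by apply: leq_trans; rewrite -addn1.
Qed.

Lemma card_edges_within_ord n (e : rel 'I_n) (A : {set 'I_n}) : simple_graph e ->
  #|edges_within e A| =
  #|[set p : 'I_n * 'I_n | [&& e p.1 p.2, p.1 < p.2, p.1 \in A & p.2 \in A]]|.
Proof.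
move=> [esym eirr]; set P := [set p | _].
have inj : {in P &, injective (fun p => [set p.1; p.2])}.
  move=> [a b] [a' b']; rewrite !inE /= => /and4P[_ ab _ _] /and4P[_ ab' _ _] eq.
  have := set21 a' b'; have := set22 a' b'; rewrite -eq !inE -!val_eqE /=.
  have := set21 a b; have := set22 a b; rewrite eq !inE -!val_eqE /=.
  by move=> h1 h2 h3 h4; apply/eqP; rewrite xpair_eqE -!val_eqE /=; lia.
rewrite -(card_in_imset inj); apply: eq_card => E; apply/imset2P/imsetP.
  case=> x y xA; rewrite inE => /andP[yA exy] ->.
  have xy : x != y by apply: contraTneq exy => ->; rewrite eirr.
  case: (ltngtP x y) => [lt|gt|eq]; last by rewrite (val_inj eq) eqxx in xy.
  - by exists (x, y); rewrite // inE /= exy lt xA yA.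
  - by exists (y, x); rewrite ?inE /= 1?esym ?exy ?gt ?xA ?yA // setUC.
case=> [[x y]]; rewrite inE /= => /and4P[exy _ xA yA] ->.
by exists x y; rewrite // inE yA.
Qed.

Lemma num_edges_edges_within n (e : rel 'I_n) : simple_graph e ->
  num_edges e = #|edges_within e setT|.
Proof.
move=> se; rewrite card_edges_within_ord //; apply: eq_card => p.
by rewrite !inE !andbT.
Qed.

Lemma num_edges_complete n : num_edges (fun x y : 'I_n => x != y) = 'C(n, 2).
Proof.
rewrite num_edges_edges_within; last by split=> [x y|x]; rewrite ?eqxx // eq_sym.
rewrite -[n in 'C(n, _)]card_ord -card_draws; apply: eq_card => E.
rewrite inE; apply/imset2P/cards2P.
  by case=> x y _; rewrite !inE => xy ->; exists x, y.
by case=> x [y [xy ->]]; exists x y; rewrite ?inE.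
Qed.

Lemma num_edges_sub n (e e' : rel 'I_n) :
  subrel e e' -> num_edges e <= num_edges e'.
Proof.
move=> ee'; apply: subset_leq_card; apply/subsetP=> p; rewrite !inE.
by case/andP=> /ee' -> ->.
Qed.

Lemma num_edges_of_seq n (E : seq (nat * nat)) : uniq E ->
  (forall p, p \in E -> p.1 < p.2 < n) ->
  num_edges (fun x y : 'I_n => ((x : nat, y : nat) \in E) || ((y : nat, x : nat) \in E))
  = size E.
Proof.
move=> uE E_lt; pose f (p : 'I_n * 'I_n) := (p.1 : nat, p.2 : nat).
have f_inj : injective f by move=> [a b] [a' b'] [/val_inj -> /val_inj ->].
transitivity #|[set p | f p \in E]|.
  apply: eq_card => -[a b]; rewrite !inE /f /=.
  case: (boolP ((a : nat, b : nat) \in E)) => [/E_lt /= /andP[-> _] //|_] /=.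
  by case: (boolP ((b : nat, a : nat) \in E)) => // /E_lt /=; lia.
rewrite cardE -(size_map f); apply/perm_size/uniq_perm=> //.
  by rewrite (map_inj_uniq f_inj) enum_uniq.
move=> [a b]; apply/mapP/idP=> [[p]|abE]; first by rewrite mem_enum inE => ? ->.
have /andP[ab b_lt] := E_lt _ abE.
by exists (Ordinal (ltn_trans ab b_lt), Ordinal b_lt); rewrite ?mem_enum ?inE.
Qed.

Lemma walk_within_ord n (e : rel nat) (A : pred nat) (x y : 'I_n) :
  (forall u v, e u v -> v < n) -> walk_within e A x y ->
  walk_within (fun u v : 'I_n => e u v) (fun u : 'I_n => A u) x y.
Proof.
move=> e_lt [p [pp lp ap]]; elim: p x pp lp ap => [|z p IH] x /=.
  by move=> _ /val_inj -> _; apply: walk_within_refl.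
case/andP=> xz zp lp /andP[Az ap].
apply: (@walk_within_trans _ _ _ (Ordinal (e_lt _ _ xz))); first exact: walk_within1.
exact: IH.
Qed.

Section ColorAvoiding.
Variables (n k : nat) (e : rel 'I_n) (c : 'I_n -> 'I_k).
Hypothesis e_icac : int_vertex_color_avoiding_connected e c.

Lemma icac_walk_within col x y : c x != col -> c y != col ->
  walk_within e (fun v => c v != col) x y.
Proof.
move=> cx cy; have [p [pp lp _ ip]] := e_icac col x y.
exists p; split=> //; case/lastP: p pp lp ip => [//|q z] _.
by rewrite last_rcons belast_rcons all_rcons => -> ip; rewrite cy.
Qed.

Lemma icac_other_color_neighbor : 1 < k -> uses_exactly_k_colors c ->
  forall v, exists w, e v w && (c w != c v).
Proof.
move=> k_gt1 c_onto v.
have [j jv] : exists j : 'I_k, j != c v.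
  have k_gt0 : 0 < k by apply: ltnW.
  case: (eqVneq (Ordinal k_gt0) (c v)) => [<-|]; last by exists (Ordinal k_gt0).
  by exists (Ordinal k_gt1); rewrite -val_eqE.
have [y cy] := c_onto j; have [[|z p] [/= pp lp _ ip]] := e_icac (c v) v y.
  by move: jv; rewrite -cy -lp eqxx.
case/andP: pp => evz _; exists z; rewrite evz /=.
case: p lp ip => [/= -> _|z' p _ /= /andP[] //]; by rewrite cy.
Qed.

End ColorAvoiding.

Lemma icac_one_color_complete n (e : rel 'I_n) (c : 'I_n -> 'I_1) :
  int_vertex_color_avoiding_connected e c -> forall u v, u != v -> e u v.
Proof.
move=> e_icac u v uv; have [[|z [|z' p]] [/= pp lp _ ip]] := e_icac (c u) u v.
- by rewrite lp eqxx in uv.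
- by case/andP: pp; rewrite lp.
- by move: ip; rewrite !(ord1 (c _)) eqxx.
Qed.

Section WalksToIcac.
Variables (n k : nat) (e : rel 'I_n) (c : 'I_n -> 'I_k).

Lemma icac_of_walk col u v :
  walk_within e (fun w => (c w != col) || (w == v)) u v ->
  int_avoiding_connected e c col u v.
Proof.
(* After shortening, v occurs only as the last vertex, hence is not internal. *)
case=> p [pp lp ap]; move: lp; case: (shortenP pp) => q qp uq sub_q lq.
exists q; split=> //; case/lastP: q qp uq sub_q lq => [//|q z] _ uq sub_q.
rewrite last_rcons belast_rcons => zv; apply/allP=> w wq.
move: uq; rewrite -rcons_cons rcons_uniq inE negb_or => /andP[/andP[_ zq] _].
have /(allP ap) /orP[//|/eqP wv] : w \in p by apply: sub_q; rewrite mem_rcons !inE wq !orbT.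
by move: wq zq; rewrite wv -zv => ->.
Qed.

Lemma icac_of_walks : symmetric e ->
  (forall v, exists w, e v w && (c w != c v)) ->
  (forall col x y, c x != col -> c y != col ->
     walk_within e (fun w => c w != col) x y) ->
  int_vertex_color_avoiding_connected e c.
Proof.
move=> esym nbr walks col u v; apply: icac_of_walk.
have [u' cu' wu] : exists2 u', c u' != col & walk_within e (fun w => c w != col) u u'.
  case: (eqVneq (c u) col) => [cu|cu]; last by exists u => //; apply: walk_within_refl.
  have [w /andP[uw cw]] := nbr u; exists w; first by rewrite -cu.
  by apply: walk_within1; rewrite // -cu.
have [v' cv' wv] : exists2 v', c v' != col &
    walk_within e (fun w => (c w != col) || (w == v)) v' v.
  case: (eqVneq (c v) col) => [cv|cv]; last by exists v => //; apply: walk_within_refl.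
  have [w /andP[vw cw]] := nbr v; exists w; first by rewrite -cv.
  by apply: walk_within1; rewrite ?eqxx ?orbT // esym.
apply: walk_within_trans wv.
by apply: walk_within_sub (walk_within_trans wu (walks col u' v' cu' cv')) => // a b _ ->.
Qed.

End WalksToIcac.

Section EdgeCount.
Variables (n k : nat) (e : rel 'I_n) (c : 'I_n -> 'I_k).
Hypotheses (e_simple : simple_graph e) (k_gt1 : 1 < k)
  (c_onto : uses_exactly_k_colors c)
  (e_icac : int_vertex_color_avoiding_connected e c).

Let is_edge (p : 'I_n * 'I_n) := e p.1 p.2 && (p.1 < p.2).
Let avoid (col : 'I_k) : {set 'I_n} := [set v | c v != col].
Let edges_avoiding (col : 'I_k) :=
  [set p | is_edge p && (c p.1 != col) && (c p.2 != col)].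
Let bichromatic := [set p | is_edge p && (c p.1 != c p.2)].

Lemma card_avoid_le col : #|avoid col| <= #|edges_avoiding col| + 1.
Proof.
have -> : #|edges_avoiding col| = #|edges_within e (avoid col)|.
  rewrite card_edges_within_ord //; apply: eq_card => p.
  by rewrite !inE /is_edge !andbA.
apply: card_le_edges_within => x y; rewrite !inE => cx cy.
apply: walk_within_sub (icac_walk_within e_icac cx cy) => // u v _.
by rewrite inE.
Qed.

Lemma sum_card_avoid : \sum_col #|avoid col| = n * (k - 1).
Proof.
under eq_bigr => col _ do rewrite -sum1dep_card.
rewrite (exchange_big_dep predT) //= -[n in RHS]card_ord -sum_nat_const.
apply: eq_bigr => v _; rewrite sum1dep_card subn1 -[k in k.-1]card_ord -(cardsC1 (c v)).
by apply: eq_card => col; rewrite !inE eq_sym.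
Qed.

Lemma sum_edges_avoiding :
  \sum_col #|edges_avoiding col| + #|bichromatic| = num_edges e * (k - 1).
Proof.
have -> : \sum_col #|edges_avoiding col| =
          \sum_(p | is_edge p) (k - (c p.1 != c p.2).+1).
  under eq_bigr => col _ do rewrite -sum1dep_card.
  rewrite (exchange_big_dep is_edge); last by move=> col p _ /andP[/andP[]].
  apply: eq_bigr => p ep; rewrite sum1dep_card -[k in k - _]card_ord.
  rewrite -(cardsC [set c p.1; c p.2]).
  rewrite cards2 addKn; apply: eq_card => col.
  by rewrite !inE ep negb_or ![col == _]eq_sym.
have -> : #|bichromatic| = \sum_(p | is_edge p) (c p.1 != c p.2).
  by rewrite -sum1dep_card big_mkcondr.
rewrite -big_split /= -sum_nat_cond_const; apply: eq_bigr => p _.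
by case: (c p.1 != c p.2); rewrite ?subn1 ?subn2 /=; lia.
Qed.

Lemma card_bichromatic : n <= 2 * #|bichromatic|.
Proof.
have cover : [set: 'I_n] \subset fst @: bichromatic :|: snd @: bichromatic.
  apply/subsetP=> v _.
  have [w /andP[evw cwv]] := icac_other_color_neighbor e_icac k_gt1 c_onto v.
  have [esym _] := e_simple.
  case: (ltngtP v w) => [vw|wv|/val_inj vw]; last by rewrite vw eqxx in cwv.
  - by rewrite inE (imset_f _ (_ : (v, w) \in _)) // inE /is_edge evw vw eq_sym.
  - by rewrite inE (imset_f _ (_ : (w, v) \in _)) ?orbT // inE /is_edge esym evw wv.
have := subset_leq_card cover; rewrite cardsT card_ord => /leq_trans; apply.
by rewrite mul2n -addnn (leq_trans (leq_card_setU _ _)) // leq_add ?leq_imset_card.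
Qed.

Lemma icac_num_edges_lower :
  n * (2 * k - 1) <= num_edges e * (2 * k - 2) + 2 * k.
Proof.
have avoid_le : \sum_col #|avoid col| <= \sum_col #|edges_avoiding col| + k.
  rewrite -[k in _ + k]card_ord -sum1_card -big_split /=.
  by apply: leq_sum => col _; apply: card_avoid_le.
have := sum_edges_avoiding; have := card_bichromatic; move: avoid_le.
rewrite sum_card_avoid; nia.
Qed.

End EdgeCount.

Lemma icac_bound_le n k (m : int) : 1 < k ->
  (icac_bound n k <= m)%R = (Posz (n * (2 * k - 1)) <= m * Posz (2 * k - 2) + Posz (2 * k))%R.
Proof.
case: k => [|[|j]] // _; rewrite /icac_bound /= ceil_le_int.
have -> : (2 * j.+2 - 1 = 2 * j + 3)%N by lia.
have -> : (2 * j.+2 - 2 = 2 * j + 2)%N by lia.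
have -> : (j.+2 - 1 = j + 1)%N by lia.
have pos : (0 < (2 * j + 2)%:R :> rat)%R by rewrite ltr0n addn2.
rewrite -(ler_pM2r pos).
have -> : (((2 * j + 3)%:R / (2 * j + 2)%:R * n%:R - j.+2%:R / (j + 1)%:R) * (2 * j + 2)%:R
           = (Posz (n * (2 * j + 3)) - Posz (2 * j.+2))%:~R :> rat)%R.
  rewrite rmorphB /= -!pmulrn !natrM !natrD /=.
  have j0 : (0 <= j%:R :> rat)%R := ler0n _ _.
  by field; apply/andP; split; apply/eqP; lra.
by rewrite pmulrn -intrM ler_int; apply/idP/idP; lia.
Qed.

Lemma icac_boundE n k m : 1 < k ->
  n * (2 * k - 1) <= m * (2 * k - 2) + 2 * k ->
  m.-1 * (2 * k - 2) + 2 * k < n * (2 * k - 1) -> 0 < m ->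
  icac_bound n k = m.
Proof.
move=> k_gt1 le_m lt_m m_gt0; apply/le_anti/andP; split.
  by rewrite icac_bound_le //; lia.
rewrite -[Posz m](subrK 1%R) lezD1 ltNge icac_bound_le //; nia.
Qed.

(* The ear graph of ss lives on [0, ears_order ss), with hubs 0 and 1.  In s :: ss the ear of
   length s is the last one added, on the vertices N, ..., N + s - 1 where N = ears_order ss.
   Edges are listed once, as pairs (x, y) with x < y. *)
Definition ears_order (ss : seq nat) : nat := (sumn ss).+2.

Definition ear_edges (N s : nat) : seq (nat * nat) :=
  (0, N) :: (1, N + s.-1) :: [seq (x, x.+1) | x <- iota N s.-1].

Fixpoint ears_edges (ss : seq nat) : seq (nat * nat) :=
  if ss is s :: ss' then ear_edges (ears_order ss') s ++ ears_edges ss'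
  else [:: (0, 1)].

Definition ears_adj (ss : seq nat) : rel nat :=
  fun x y => ((x, y) \in ears_edges ss) || ((y, x) \in ears_edges ss).

Definition ear_color (N s x : nat) : nat :=
  if x == N then 0 else if x == N + s.-1 then 1 else (x - N + 3) %/ 2.

Fixpoint ears_color (ss : seq nat) (x : nat) : nat :=
  if ss is s :: ss' then
    if x < ears_order ss' then ears_color ss' x else ear_color (ears_order ss') s x
  else x == 1.

Lemma mem_ear_edges N s x y : ((x, y) \in ear_edges N s) =
  [|| (x == 0) && (y == N), (x == 1) && (y == N + s.-1)
    | [&& N <= x, x < N + s.-1 & y == x.+1]].
Proof.
rewrite /ear_edges !inE !xpair_eqE; congr [|| _, _ | _]; apply/mapP/idP.
  by case=> z; rewrite mem_iota => /andP[Nz zs] [-> ->]; rewrite Nz eqxx /=; lia.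
by case/and3P=> Nx xs /eqP ->; exists x; rewrite ?mem_iota ?Nx //=; lia.
Qed.

Lemma size_ears_edges ss : 0 \notin ss -> size (ears_edges ss) = (sumn ss + size ss).+1.
Proof.
elim: ss => [|s ss IH] //=; rewrite inE negb_or => /andP[s_gt0 /IH {}IH].
by rewrite size_cat IH /= size_map size_iota; lia.
Qed.

Lemma ears_edges_lt ss p : 0 \notin ss -> p \in ears_edges ss ->
  p.1 < p.2 < ears_order ss.
Proof.
elim: ss => [|s ss IH]; first by rewrite inE => _ /eqP ->.
rewrite inE negb_or mem_cat => /andP[s_gt0 /IH {}IH] /orP[|/IH].
  by case: p {IH} => x y; rewrite mem_ear_edges /ears_order /=; lia.
by rewrite /ears_order /=; lia.
Qed.

Lemma uniq_ears_edges ss : 0 \notin ss -> uniq (ears_edges ss).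
Proof.
elim: ss => [|s ss IH] //; rewrite inE negb_or => /andP[s_gt0 ss0].
rewrite cat_uniq IH // andbT; apply/andP; split.
  have pair_inj : injective (fun x => (x, x.+1)) by move=> x y [].
  rewrite /ear_edges /= !inE !negb_or (map_inj_uniq pair_inj) iota_uniq andbT.
  by apply/andP; split; apply/mapP=> -[z]; rewrite mem_iota /ears_order => ? [? ?]; lia.
apply/hasPn=> -[x y] old; rewrite mem_ear_edges.
by have := ears_edges_lt ss0 old; rewrite /ears_order /=; lia.
Qed.

Lemma ears_adj_sym ss : symmetric (ears_adj ss).
Proof. by move=> x y; rewrite /ears_adj orbC. Qed.

Lemma ears_adj_lt ss x y : 0 \notin ss -> ears_adj ss x y ->
  [&& x != y, x < ears_order ss & y < ears_order ss].
Proof. by move=> ss0 /orP[] /(ears_edges_lt ss0) /=; lia. Qed.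

Lemma ears_adj_cons s ss x y : ears_adj ss x y -> ears_adj (s :: ss) x y.
Proof. by rewrite /ears_adj !mem_cat => /orP[] ->; rewrite !orbT. Qed.

Lemma ears_adj_ear s ss x y :
  (x, y) \in ear_edges (ears_order ss) s -> ears_adj (s :: ss) x y.
Proof. by rewrite /ears_adj mem_cat => ->. Qed.

Lemma ears_adj_hubs ss h h' : h < 2 -> h' < 2 -> h != h' -> ears_adj ss h h'.
Proof.
move=> h_lt2 h'_lt2 hh'; elim: ss => [|s ss IH]; last exact: ears_adj_cons.
by rewrite /ears_adj !inE !xpair_eqE; lia.
Qed.

Lemma ears_color_hub ss j : j < 2 -> ears_color ss j = j.
Proof.
elim: ss => [|s ss IH] j_lt2 /=; first by case: j j_lt2 => [|[|]].
by rewrite ifT ?IH // /ears_order; lia.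
Qed.

Lemma ears_color_ear s ss x : ears_order ss <= x ->
  ears_color (s :: ss) x = ear_color (ears_order ss) s x.
Proof. by move=> Nx; rewrite /= ltnNge Nx. Qed.

Lemma ears_other_color_neighbor ss x : 0 \notin ss -> x < ears_order ss ->
  exists2 y, ears_adj ss x y & ears_color ss y != ears_color ss x.
Proof.
elim: ss x => [|s ss IH] x.
  move=> _ x_lt2; have {}x_lt2 : x < 2 := x_lt2.
  exists (1 - x); first by apply: ears_adj_hubs; lia.
  by rewrite !ears_color_hub //; lia.
rewrite inE negb_or => /andP[s_gt0 ss0] x_lt.
have [old|new] := ltnP x (ears_order ss).
  have [y xy cy] := IH x ss0 old; have /and3P[_ _ y_lt] := ears_adj_lt ss0 xy.
  by exists y; rewrite ?ears_adj_cons //= old y_lt.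
have x_ear : x < ears_order ss + s by move: x_lt; rewrite /ears_order /=; lia.
have [s1|s_gt1] := eqVneq s 1.
  exists 1; first by rewrite ears_adj_sym ears_adj_ear // mem_ear_edges s1; lia.
  rewrite ears_color_hub // ears_color_ear // /ear_color s1.
  by repeat case: ifP => [/eqP|/negbT/eqP] ?; lia.
case: (boolP ((x == ears_order ss + s.-1) || odd (x - ears_order ss))) => [down|up].
  exists x.-1; first by rewrite ears_adj_sym ears_adj_ear // mem_ear_edges; lia.
  rewrite !ears_color_ear /ear_color; try lia.
  by repeat case: ifP => [/eqP|/negbT/eqP] ?; lia.
exists x.+1; first by rewrite ears_adj_ear // mem_ear_edges; lia.
rewrite !ears_color_ear /ear_color; try lia.
by repeat case: ifP => [/eqP|/negbT/eqP] ?; lia.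
Qed.

Lemma ears_walk_to_hub ss c x : 0 \notin ss -> x < ears_order ss -> ears_color ss x != c ->
  exists2 h, (h < 2) && (h != c) &
    walk_within (ears_adj ss) (fun z => ears_color ss z != c) x h.
Proof.
elim: ss x => [|s ss IH] x.
  move=> _ x_lt2; rewrite ears_color_hub // => xc.
  by exists x; rewrite ?x_lt2 ?xc //; apply: walk_within_refl.
rewrite inE negb_or => /andP[s_gt0 ss0] x_lt xc.
have [old|new] := ltnP x (ears_order ss).
  have xc_old : ears_color ss x != c by move: xc; rewrite /= old.
  have [h hc walk] := IH x ss0 old xc_old.
  exists h => //; apply: walk_within_sub walk => [u v|u v uv]; first exact: ears_adj_cons.
  by have /and3P[_ _ v_lt] := ears_adj_lt ss0 uv; rewrite /= v_lt.
have x_ear : x < ears_order ss + s by move: x_lt; rewrite /ears_order /=; lia.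
move: xc; rewrite ears_color_ear // => xc.
(* Leave the ear through hub 0 if the colours below x on the ear all differ from c, otherwise
   through hub 1. *)
case: (boolP ((c == 1) || [&& c != 0, x != ears_order ss + s.-1
                             & ear_color (ears_order ss) s x < c])) => [down|up].
  exists 0; first by move: down; lia.
  apply: (@walk_within_trans _ _ _ (ears_order ss)).
    apply: walk_within_down => // z zx.
      by rewrite ears_adj_sym ears_adj_ear // mem_ear_edges; lia.
    rewrite ears_color_ear; last lia.
    move: down xc; rewrite /ear_color.
    by repeat case: ifP => [/eqP|/negbT/eqP] ?; lia.
  apply: walk_within1; last by rewrite ears_color_hub //; move: down; lia.
  by rewrite ears_adj_sym ears_adj_ear // mem_ear_edges; lia.
exists 1; first by move: up; lia.
apply: (@walk_within_trans _ _ _ (ears_order ss + s.-1)).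
  apply: walk_within_up; first lia.
    by move=> z zx; rewrite ears_adj_ear // mem_ear_edges; lia.
  move=> z zx; rewrite ears_color_ear; last lia.
  move: up xc; rewrite /ear_color.
  by repeat case: ifP => [/eqP|/negbT/eqP] ?; lia.
apply: walk_within1; last by rewrite ears_color_hub //; move: up; lia.
by rewrite ears_adj_sym ears_adj_ear // mem_ear_edges; lia.
Qed.

Lemma ears_walk ss c x y : 0 \notin ss ->
  x < ears_order ss -> y < ears_order ss ->
  ears_color ss x != c -> ears_color ss y != c ->
  walk_within (ears_adj ss) (fun z => ears_color ss z != c) x y.
Proof.
move=> ss0 x_lt y_lt xc yc.
have [hx /andP[hx_lt2 hxc] wx] := ears_walk_to_hub ss0 x_lt xc.
have [hy /andP[hy_lt2 hyc] wy] := ears_walk_to_hub ss0 y_lt yc.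
apply: walk_within_trans wx _; apply: (@walk_within_trans _ _ _ hy).
  case: (eqVneq hx hy) => [->|hxy]; first exact: walk_within_refl.
  by apply: walk_within1; rewrite ?ears_adj_hubs ?ears_color_hub.
exact: walk_within_sym (@ears_adj_sym ss) yc wy.
Qed.

Lemma ears_color_lt k ss x : 1 < k -> all (fun s => s <= 2 * k - 2) ss ->
  x < ears_order ss -> ears_color ss x < k.
Proof.
move=> k_gt1; elim: ss x => [|s ss IH] x.
  by move=> _ _; apply: leq_trans k_gt1; rewrite ltnS leq_b1.
case/andP=> s_le ss_le x_lt /=; case: ifP => [/IH -> //|/negbT]; rewrite -leqNgt => new.
by move: x_lt; rewrite /ears_order /ear_color /=; repeat case: ifP => [/eqP|/negbT/eqP] ?; lia.
Qed.

Lemma ears_color_long_ear k ss j : 1 < j < k ->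
  ears_color (2 * k - 2 :: ss) (ears_order ss + 2 * j - 3) = j.
Proof.
move=> j_bnd; rewrite ears_color_ear /ear_color; last lia.
by repeat case: ifP => [/eqP|/negbT/eqP] ?; lia.
Qed.

Lemma ears_graph_icac k ss (L := 2 * k - 2) : 1 < k -> 0 \notin ss ->
  all (fun s => s <= L) ss ->
  exists (e : rel 'I_(ears_order (L :: ss))) (c : 'I_(ears_order (L :: ss)) -> 'I_k),
    [/\ simple_graph e, uses_exactly_k_colors c,
        int_vertex_color_avoiding_connected e c &
        num_edges e = (L + sumn ss + size ss).+2].
Proof.
move=> k_gt1 ss0 ss_le; set ts := L :: ss; set n := ears_order ts.
have ts0 : 0 \notin ts by rewrite inE negb_or ss0 andbT /L; lia.
have ts_le : all (fun s => s <= 2 * k - 2) ts by rewrite /= leqnn.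
have adj_lt u v : ears_adj ts u v -> v < n by case/(ears_adj_lt ts0)/and3P.
pose c (x : 'I_n) : 'I_k := insubd (Ordinal (ltnW k_gt1)) (ears_color ts x).
have cE (x : 'I_n) : c x = ears_color ts x :> nat.
  by rewrite insubdK // unfold_in; apply: ears_color_lt.
exists (fun x y : 'I_n => ears_adj ts x y), c; split.
- split=> [x y|x]; first exact: ears_adj_sym.
  by apply/negP=> /(ears_adj_lt ts0); rewrite eqxx.
- move=> j; case: (ltnP j 2) => [j_lt2|j_ge2].
    have j_lt : j < n by apply: leq_trans j_lt2 _.
    by exists (Ordinal j_lt); apply: val_inj; rewrite /= cE ears_color_hub.
  have j_lt : ears_order ss + 2 * j - 3 < n.
    by have := ltn_ord j; rewrite /n /ts /L /ears_order /=; lia.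
  exists (Ordinal j_lt); apply: val_inj; rewrite /= cE ears_color_long_ear //.
  by rewrite j_ge2 ltn_ord.
- apply: icac_of_walks => [x y|v|col x y cx cy]; first exact: ears_adj_sym.
    have [w vw cw] := ears_other_color_neighbor ts0 (ltn_ord v).
    by exists (Ordinal (adj_lt _ _ vw)); rewrite vw -val_eqE /= !cE.
  have avoid (w : 'I_n) : (c w != col) = (ears_color ts w != col) by rewrite -val_eqE /= cE.
  rewrite avoid in cx; rewrite avoid in cy.
  have := walk_within_ord adj_lt (ears_walk ts0 (ltn_ord x) (ltn_ord y) cx cy).
  by apply: walk_within_sub => // u w _; rewrite avoid.
- rewrite (num_edges_of_seq (uniq_ears_edges ts0)) ?size_ears_edges //= ?addnS //.
  by move=> p /(ears_edges_lt ts0).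
Qed.

Lemma icac_sharp k n : 1 < k -> 2 * k <= n ->
  exists (e : rel 'I_n) (c : 'I_n -> 'I_k),
    [/\ simple_graph e, uses_exactly_k_colors c,
        int_vertex_color_avoiding_connected e c &
        Posz (num_edges e) = icac_bound n k].
Proof.
move=> k_gt1 n_ge; set L := 2 * k - 2.
have L_gt0 : 0 < L by rewrite /L; lia.
(* n - 2 = L + q L + r: one ear of length L showing all colours, q more such ears and a
   remainder ear of length r (none if r = 0). *)
set q := (n - 2 * k) %/ L; set r := (n - 2 * k) %% L.
have r_lt : r < L by rewrite ltn_mod.
have n_eq : n - 2 * k = q * L + r by apply: divn_eq.
pose ss := nseq q L ++ nseq (r != 0) r.
have ss0 : 0 \notin ss by rewrite mem_cat !mem_nseq; apply/norP; split; lia.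
have ss_le : all (fun s => s <= L) ss.
  by rewrite all_cat !all_nseq leqnn ltnW ?orbT.
have -> : n = ears_order (L :: ss).
  by rewrite /ears_order /= sumn_cat !sumn_nseq /L; move: n_eq; case: eqP; lia.
have [e [c [e_simple c_onto e_icac ne]]] := ears_graph_icac k_gt1 ss0 ss_le.
exists e, c; split=> //; rewrite ne; apply/esym/icac_boundE => //.
all: rewrite /ears_order /= sumn_cat !sumn_nseq size_cat !size_nseq /L.
all: move: n_eq; rewrite -/L; case: eqP => /= ?; nia.
Qed.

Lemma icac_sharp_one_color n : 0 < n ->
  exists (e : rel 'I_n) (c : 'I_n -> 'I_1),
    [/\ simple_graph e, uses_exactly_k_colors c,
        int_vertex_color_avoiding_connected e c &
        Posz (num_edges e) = icac_bound n 1].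
Proof.
move=> n_gt0; exists (fun x y : 'I_n => x != y), (fun _ => ord0); split.
- by split=> [x y|x]; rewrite ?eqxx // eq_sym.
- by move=> j; exists (Ordinal n_gt0); rewrite (ord1 j).
- move=> col u v; have [<-|uv] := eqVneq u v; first by exists [::].
  by exists [:: v]; split; rewrite /= ?inE ?uv.
- by rewrite num_edges_complete.
Qed.

Theorem theorem3p16 :
  (forall (n k : nat) (e : rel 'I_n) (c : 'I_n -> 'I_k),
      (1 <= k)%N ->
      simple_graph e ->
      uses_exactly_k_colors c ->
      int_vertex_color_avoiding_connected e c ->
      (icac_bound n k <= Posz (num_edges e))%R)
  /\
  (forall k : nat, (1 <= k)%N ->
     exists N : nat, forall n : nat, (N <= n)%N ->
       exists (e : rel 'I_n) (c : 'I_n -> 'I_k),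
         [/\ simple_graph e, uses_exactly_k_colors c,
             int_vertex_color_avoiding_connected e c &
             Posz (num_edges e) = icac_bound n k]).
Proof.
split=> [n k e c k_ge1 e_simple c_onto e_icac | k k_ge1].
  case: (ltngtP k 1) => [|k_gt1|k1]; first by rewrite ltnNge k_ge1.
    rewrite icac_bound_le //.
    by have := icac_num_edges_lower e_simple k_gt1 c_onto e_icac; nia.
  subst k; rewrite /icac_bound eqxx lez_nat -num_edges_complete.
  exact/num_edges_sub/icac_one_color_complete.
case: (ltngtP k 1) => [|k_gt1|->]; first by rewrite ltnNge k_ge1.
  by exists (2 * k) => n; apply: icac_sharp.
by exists 1 => n; apply: icac_sharp_one_color.
Qed.
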